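(* Let $G$ be an abelian group and let $Z$ be a finite multiset of elements of $G$ with $\dim(Z)\geqslant1$. Set $K(Z)=|Z|/\dim(Z)$. Then $$|Z|\geqslant\frac{K(Z)}{2(2+\log_2K(Z))}\cdot\log_2|\Sigma(Z)|.$$
   Context: $|Z|$ is the size of $Z$ counted with multiplicity. $\Sigma(Z)=\{\sum_{z\in Z'}z:Z'\subseteq Z\}$, where $Z'$ ranges over sub-multisets of $Z$. A (multi)set is dissociated if any two of its sub-multisets with equal sums are equal. $\dim(Z)$ is the size of the largest dissociated sub-multiset of $Z$. *)

From mathcomp Require Import all_boot all_order all_algebra.
From Stdlib Require Import Reals.
Set Implicit Arguments. Unset Strict Implicit. Unset Printing Implicit Defensive.
Import GRing.Theory.

(* A finite multiset of elements of G is represented by a sequence Z;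
   its sub-multisets are (up to permutation) the sequences  mask m Z. *)

Section Defs.
Variable G : zmodType.
Local Open Scope ring_scope.

Definition msum (W : seq G) : G := \sum_(x <- W) x.

Definition dissociated (W : seq G) : bool :=
  [forall m1 : (size W).-tuple bool, forall m2 : (size W).-tuple bool,
    (msum (mask m1 W) == msum (mask m2 W)) ==> perm_eq (mask m1 W) (mask m2 W)].

Definition dimZ (Z : seq G) : nat :=
  \max_(t : (size Z).-tuple bool | dissociated (mask t Z)) size (mask t Z).

Definition Sigma (Z : seq G) : seq G :=
  undup [seq msum (mask t Z) | t : (size Z).-tuple bool].

End Defs.

Definition log2 (x : R) : R := (ln x / ln 2)%R.

(* For every value of Sigma(Z) keep the index set that attains it with the
   least binary code. By Pajor's form of the Sauer--Shelah lemma this family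
   of |Sigma(Z)| sets shatters at least |Sigma(Z)| index sets, and each
   shattered set T is dissociated: if subsets U, V of T have equal sums and S
   in the family has trace U on T, exchanging U for V in S keeps the sum, so by
   minimality the code of U is at most that of V, and symmetrically. Hence
   |Sigma(Z)| is at most the number of sets of size <= d = dim(Z), which is
   <= (e n / d)^d; taking logarithms gives the bound. *)

From mathcomp Require Import all_boot all_order all_algebra zify.
Set Implicit Arguments. Unset Strict Implicit. Unset Printing Implicit Defensive.

Section Shattering.
Variable X : finType.
Implicit Types (F : {set {set X}}) (S T U : {set X}) (a : X).

Definition shatters F T :=
  [forall U : {set X}, (U \subset T) ==> [exists S in F, S :&: T == U]].

Definition shattered F := [set T | shatters F T].

Lemma shattersP F T :
  reflect (forall U, U \subset T -> exists2 S, S \in F & S :&: T = U) (shatters F T).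
Proof.
apply: (iffP forallP) => [shF U sUT | shF U]; last first.
  by apply/implyP => /shF[S SF <-]; apply/existsP; exists S; rewrite SF eqxx.
by have /implyP/(_ sUT)/existsP[S /andP[SF /eqP <-]] := shF U; exists S.
Qed.

Lemma shattersS F F' T : F \subset F' -> shatters F T -> shatters F' T.
Proof.
move=> sFF' /shattersP shF; apply/shattersP => U /shF[S SF <-].
by exists S; first exact: (subsetP sFF').
Qed.

Lemma shatters_notin F T a :
  (forall S, S \in F -> a \notin S) -> shatters F T -> a \notin T.
Proof.
move=> aF /shattersP/(_ T (subxx T))[S /aF aS STT].
by apply: contra aS => aT; rewrite -STT inE in aT; case/andP: aT.
Qed.

Lemma card_le_shattered_cover0 F : cover F = set0 -> #|F| <= #|shattered F|.
Proof.
move=> coverF0; have [-> | [S0 S0F]] := set_0Vmem F; first by rewrite cards0.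
have sF : F \subset [set set0].
  apply/subsetP => S SF; rewrite inE -subset0 -coverF0.
  exact: bigcup_sup.
rewrite (leq_trans (subset_leq_card sF)) // cards1 card_gt0; apply/set0Pn.
exists set0; rewrite inE; apply/shattersP => U; rewrite subset0 => /eqP->.
by exists S0; rewrite ?setI0.
Qed.

Section Split.
Variables (a : X) (F : {set {set X}}).

Definition avoiding := [set S in F | a \notin S].
Definition stripped := [set S :\ a | S : {set X} in F & a \in S].

Lemma card_avoiding_stripped : #|avoiding| + #|stripped| = #|F|.
Proof.
rewrite card_in_imset => [|S1 S2]; last first.
  by rewrite !inE => /andP[_ aS1] /andP[_ aS2] eqS; rewrite -(setD1K aS1) eqS setD1K.
rewrite -(cardsID [set S : {set X} | a \in S] F) addnC.
by congr (_ + _); apply: eq_card => S; rewrite !inE andbC.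
Qed.

Lemma cover_avoiding : cover avoiding \subset cover F :\ a.
Proof.
apply/bigcupsP => S; rewrite inE => /andP[SF aS]; apply/subsetP => x xS.
rewrite !inE (subsetP (bigcup_sup S SF)) // andbT.
by apply: contraNneq aS => <-.
Qed.

Lemma cover_stripped : cover stripped \subset cover F :\ a.
Proof.
apply/bigcupsP => S' /imsetP[S]; rewrite inE => /andP[SF _] ->.
exact/setSD/bigcup_sup.
Qed.

Lemma notin_shatters_avoiding T : shatters avoiding T -> a \notin T.
Proof. by apply: shatters_notin => S; rewrite inE => /andP[]. Qed.

Lemma notin_shatters_stripped T : shatters stripped T -> a \notin T.
Proof. by apply: shatters_notin => _ /imsetP[S _ ->]; rewrite setD11. Qed.

Lemma shatters_stripped T : shatters stripped T -> shatters F T.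
Proof.
move=> shT; have aT := notin_shatters_stripped shT.
move/shattersP: shT => shT; apply/shattersP => U /shT[_ /imsetP[S SFa ->] <-].
exists S; first by move: SFa; rewrite inE => /andP[].
apply/setP => x; rewrite !inE; case: (x =P a) => [-> | _] //=.
by rewrite (negbTE aT) andbF.
Qed.

Lemma shatters_setU1 T :
  shatters avoiding T -> shatters stripped T -> shatters F (a |: T).
Proof.
move=> sh0 sh1; have aT := notin_shatters_avoiding sh0.
move/shattersP: sh0 => sh0; move/shattersP: sh1 => sh1.
apply/shattersP => U sUaT.
have sUaT' : U :\ a \subset T.
  by rewrite subDset setUC; apply: (subset_trans sUaT); rewrite setUC.
have [aU | aU] := boolP (a \in U).
  have [S' /imsetP[S SFa ->] eqU] := sh1 _ sUaT'.
  move: SFa; rewrite inE => /andP[SF aS]; exists S => //; apply/setP => x.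
  move/setP/(_ x): eqU; rewrite !inE.
  by case: (x =P a) => [-> | _] //=; rewrite aS aU.
have eqUa : U :\ a = U by apply/setDidPl; rewrite disjoint_sym disjoints1.
have sUT : U \subset T by rewrite -eqUa.
have [S SFa eqU] := sh0 _ sUT.
move: SFa; rewrite inE => /andP[SF aS]; exists S => //; apply/setP => x.
move/setP/(_ x): eqU; rewrite !inE.
by case: (x =P a) => [-> | _] //=; rewrite (negbTE aS) (negbTE aU).
Qed.

Lemma card_shattered_avoiding_stripped :
  #|shattered avoiding| + #|shattered stripped| <= #|shattered F|.
Proof.
set sh0 := shattered avoiding; set sh1 := shattered stripped.
pose I := [set a |: T | T in sh0 :&: sh1].
have cardI : #|I| = #|sh0 :&: sh1|.
  apply: card_in_imset => T1 T2; rewrite !inE => /andP[sh01 _] /andP[sh02 _] eqT.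
  by rewrite -(setU1K (notin_shatters_avoiding sh01)) eqT setU1K // notin_shatters_avoiding.
have disjI : (sh0 :|: sh1) :&: I = set0.
  apply/setP => T; rewrite !inE; apply/andP => -[T01 /imsetP[T' _ eqT]].
  have : a \notin T.
    by case/orP: T01; [apply: notin_shatters_avoiding | apply: notin_shatters_stripped].
  by rewrite eqT setU11.
have subF : (sh0 :|: sh1) :|: I \subset shattered F.
  apply/subsetP => T; rewrite !inE => /orP[/orP[shT | shT] | /imsetP[T' ]].
  - by apply: shattersS shT; apply/subsetP => S; rewrite inE => /andP[].
  - exact: shatters_stripped.
  - by rewrite !inE => /andP[sh0T sh1T] ->; apply: shatters_setU1.
rewrite -cardsUI -cardI; have := cardsUI (sh0 :|: sh1) I.
by rewrite disjI cards0 addn0 => <-; apply: subset_leq_card.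
Qed.

End Split.

Theorem card_le_shattered F : #|F| <= #|shattered F|.
Proof.
move: {2}#|cover F| (leqnn #|cover F|) => k; elim: k F => [|k IH] F.
  by rewrite leqn0 cards_eq0 => /eqP; apply: card_le_shattered_cover0.
have [/card_le_shattered_cover0 // | [a aF] coverF] := set_0Vmem (cover F).
have cover_lt : #|cover F :\ a| <= k by move: coverF; rewrite (cardsD1 a) aF.
rewrite -(card_avoiding_stripped a) (leq_trans _ (card_shattered_avoiding_stripped a F)) //.
apply: leq_add; apply: IH; apply: leq_trans cover_lt; apply: subset_leq_card.
  exact: cover_avoiding.
exact: cover_stripped.
Qed.

End Shattering.

Lemma sum_pow2_lt m k : \sum_(j < m | j < k) 2 ^ j < 2 ^ k.
Proof.
suff sum_lt : \sum_(j < m | j < k) 2 ^ j < 2 ^ minn m k.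
  by apply: leq_trans sum_lt _; rewrite leq_exp2l // geq_minr.
elim: m => [|m IH]; first by rewrite big_ord0 expn_gt0.
rewrite big_mkcond big_ord_recr /= -big_mkcond /=.
have [lt_mk | le_km] := ltnP m k.
  move: IH; rewrite (minn_idPl (ltnW lt_mk)) (minn_idPl lt_mk).
  by rewrite expnS mul2n -addnn ltn_add2r.
by move: IH; rewrite (minn_idPr le_km) (minn_idPr (leqW le_km)) addn0.
Qed.

Section BinaryCode.
Variable n : nat.
Implicit Types (U V : {set 'I_n}).

Definition bincode U := \sum_(i in U) 2 ^ i.

Lemma bincodeID U V : bincode U = bincode (U :&: V) + bincode (U :\: V).
Proof. exact: big_setID. Qed.

Lemma pow2_le_bincode U i : i \in U -> 2 ^ i <= bincode U.
Proof. by move=> iU; rewrite /bincode (bigD1 i) //= leq_addr. Qed.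

Lemma bincode_lt_pow2 U k : {in U, forall j : 'I_n, j < k} -> bincode U < 2 ^ k.
Proof.
move=> ltU; apply: leq_trans (sum_pow2_lt n k).
rewrite /bincode big_mkcond [X in _ < X.+1]big_mkcond ltnS /=.
by apply: leq_sum => j _; case: ifP => // /ltU ->.
Qed.

Lemma bincode_lt_max U V i0 : i0 \in U :\: V ->
  {in (U :\: V) :|: (V :\: U), forall j : 'I_n, j <= i0} -> bincode V < bincode U.
Proof.
move=> i0UV le_i0; rewrite (bincodeID V U) (bincodeID U V) setIC ltn_add2l.
apply: leq_trans (pow2_le_bincode i0UV); apply: bincode_lt_pow2 => j jVU.
rewrite ltn_neqAle le_i0 ?andbT; last by rewrite inE jVU orbT.
by apply: contraTneq jVU => /val_inj ->; rewrite inE (setDP i0UV).1.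
Qed.

Lemma bincode_inj : injective bincode.
Proof.
move=> U V eqUV; apply/eqP; apply: contraT => neqUV.
have [j0 Wj0] : exists j0, j0 \in (U :\: V) :|: (V :\: U).
  apply/set0Pn; apply: contra neqUV; rewrite setU_eq0 !setD_eq0 => /andP[sUV sVU].
  by rewrite eqEsubset sUV sVU.
case: (arg_maxnP val Wj0) => i0 Wi0 maxi0.
case/setUP: Wi0 => [i0UV | i0VU].
  by have := bincode_lt_max i0UV maxi0; rewrite eqUV ltnn.
rewrite setUC in maxi0.
by have := bincode_lt_max i0VU maxi0; rewrite eqUV ltnn.
Qed.
End BinaryCode.

Section SubsetSums.
Variables (G : zmodType) (Z : seq G).
Local Notation n := (size Z).
Local Notation z := (tnth (in_tuple Z)).
Implicit Types (S T U V : {set 'I_n}).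

Definition subsum S : G := (\sum_(i in S) z i)%R.

Lemma subsumID S T : subsum S = (subsum (S :&: T) + subsum (S :\: T))%R.
Proof. exact: big_setID. Qed.

Definition min_reps :=
  [set S | [forall S', (subsum S' == subsum S) ==> (bincode S <= bincode S')]].

Lemma msum_mask m : msum (mask m Z) = subsum [set i : 'I_n | nth false m i].
Proof. by rewrite /msum big_mask; apply: eq_bigl => i; rewrite inE andbT. Qed.

Lemma size_Sigma_le_min_reps : size (Sigma Z) <= #|min_reps|.
Proof.
rewrite cardE -(size_map subsum); apply: uniq_leq_size; first exact: undup_uniq.
move=> x; rewrite mem_undup => /mapP[t _ ->]; rewrite msum_mask.
set S0 := [set i | _].
have [S /eqP eqS minS] := @arg_minnP _ S0 (fun S => subsum S == subsum S0) (@bincode n) (eqxx _).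
rewrite -eqS; apply: map_f; rewrite mem_enum inE.
by apply/forallP => S'; apply/implyP => /eqP eqS'; apply: minS; rewrite eqS' eqS.
Qed.

(* Replacing the trace of S on T by another subset V of T with the same sum
   keeps the sum of S, so minimality of S forbids a smaller code for V. *)
Lemma min_reps_exchange S T V : S \in min_reps -> V \subset T ->
  subsum (S :&: T) = subsum V -> bincode (S :&: T) <= bincode V.
Proof.
rewrite inE => /forallP minS sVT eq_sum; pose S' := (S :\: T) :|: V.
have S'T : S' :&: T = V.
  apply/setP => i; rewrite !inE; have := subsetP sVT i.
  by case: (i \in V) (i \in T) (i \in S) => [] [] [] // /(_ isT).
have S'DT : S' :\: T = S :\: T.
  apply/setP => i; rewrite !inE; have := subsetP sVT i.
  by case: (i \in V) (i \in T) (i \in S) => [] [] [] // /(_ isT).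
have eqS' : subsum S' = subsum S by rewrite (subsumID S' T) (subsumID S T) S'T S'DT eq_sum.
have /implyP := minS S'; rewrite eqS' eqxx => /(_ isT).
by rewrite (bincodeID S T) (bincodeID S' T) S'T S'DT leq_add2r.
Qed.

Lemma shatters_min_reps_injective T :
  shatters min_reps T -> {in powerset T &, injective subsum}.
Proof.
move/shattersP=> shT.
have le_code U V : U \subset T -> V \subset T -> subsum U = subsum V -> bincode U <= bincode V.
  by move=> /shT[S minS <-]; apply: min_reps_exchange.
move=> U V; rewrite !inE => sUT sVT eq_sum; apply: (@bincode_inj n); apply/eqP.
by rewrite eqn_leq !le_code.
Qed.

Lemma card_le_dimZ T : {in powerset T &, injective subsum} -> #|T| <= dimZ Z.
Proof.
move=> injT; pose t := map_tuple (fun i => i \in T) (ord_tuple n).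
have maskZ : mask t Z = map z (enum T).
  transitivity (mask t (map z (enum 'I_n))); first by rewrite map_tnth_enum.
  by rewrite -map_mask /= -filter_mask enumT.
have -> : #|T| = size (mask t Z) by rewrite maskZ size_map cardE.
apply: leq_bigmax_cond; rewrite maskZ.
apply/forallP => m1; apply/forallP => m2; apply/implyP.
rewrite -!map_mask /msum !big_map !big_uniq ?mask_uniq ?enum_uniq // => /eqP eq_sum.
have subT m : [set i in mask m (enum T)] \in powerset T.
  by rewrite inE; apply/subsetP => i; rewrite inE => /mem_mask; rewrite mem_enum.
have /setP eqS : [set i in mask m1 (enum T)] = [set i in mask m2 (enum T)].
  apply: injT; rewrite ?subT // /subsum.
  under eq_bigl do rewrite inE; under [RHS]eq_bigl do rewrite inE.
  exact: eq_sum.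
apply/perm_map/uniq_perm; rewrite ?mask_uniq ?enum_uniq // => i.
by have := eqS i; rewrite !inE.
Qed.

Lemma dimZ_le_size : dimZ Z <= n.
Proof.
apply/bigmax_leqP => t _.
by rewrite size_mask ?size_tuple // -[X in _ <= X](size_tuple t) count_size.
Qed.

Lemma size_Sigma_gt0 : 0 < size (Sigma Z).
Proof.
have : msum (mask (nseq n false) Z) \in Sigma Z.
  by rewrite mem_undup; apply: (map_f _ (mem_enum _ [tuple of nseq n false])).
by case: (Sigma Z).
Qed.

Lemma size_Sigma_le_small_sets : size (Sigma Z) <= #|[set T : {set 'I_n} | #|T| <= dimZ Z]|.
Proof.
apply: leq_trans size_Sigma_le_min_reps (leq_trans (card_le_shattered _) _).
apply: subset_leq_card; apply/subsetP => T; rewrite !inE => shT.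
exact/card_le_dimZ/shatters_min_reps_injective.
Qed.

End SubsetSums.

Lemma card_small_sets n d :
  #|[set T : {set 'I_n} | #|T| <= d]| = \sum_(k < d.+1) 'C(n, k).
Proof.
elim: d => [|d IH].
  rewrite big_ord1 -[n in 'C(n, _)]card_ord -card_draws.
  by apply: eq_card => T; rewrite !inE leqn0.
rewrite big_ord_recr -IH -[n in 'C(n, _)]card_ord -card_draws /=.
rewrite -(cardsID [set T : {set 'I_n} | #|T| <= d]); congr (_ + _).
  by apply: eq_card => T; rewrite !inE andb_idl //; apply: leqW.
by apply: eq_card => T; rewrite !inE -ltnNge andbC eqn_leq.
Qed.

(* Compare the partial binomial sum with the terms k <= d of the expansion
   of (n + d)^n, using d^(d - k) <= n^(d - k). *)
Lemma sum_binomial_bound n d : d <= n ->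
  (\sum_(k < d.+1) 'C(n, k)) * (d ^ d * n ^ (n - d)) <= (n + d) ^ n.
Proof.
move=> le_dn; rewrite big_distrl /= expnDn.
rewrite (big_ord_widen n.+1 (fun k => 'C(n, k) * (d ^ d * n ^ (n - d)))) ?ltnS //.
rewrite big_mkcond /=; apply: leq_sum => k _; case: ifP => // /[!ltnS] le_kd.
apply: leq_mul => //.
have -> : d ^ d = d ^ k * d ^ (d - k) by rewrite -expnD subnKC.
have -> : n ^ (n - k) = n ^ (d - k) * n ^ (n - d).
  by rewrite -expnD; congr (_ ^ _); lia.
rewrite [_ * d ^ k]mulnC -!mulnA; apply: leq_mul => //; apply: leq_mul => //.
by case: (d - k) => // e; rewrite leq_exp2r.
Qed.

From Stdlib Require Import Reals Lra.

Section Logarithms.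
Local Open Scope R_scope.

Lemma INR_expn m k : INR (expn m k) = INR m ^ k.
Proof. by elim: k => [|k IH] //; rewrite expnS mulnE mult_INR IH. Qed.

Lemma ln_le x y : 0 < x -> x <= y -> ln x <= ln y.
Proof. by move=> x_gt0 [/(ln_increasing _ _ x_gt0)/Rlt_le | ->] //; right. Qed.

Lemma ln_ge0 x : 1 <= x -> 0 <= ln x.
Proof. by rewrite -ln_1; apply: ln_le; lra. Qed.

Lemma ln_le_sub1 x : 0 < x -> ln x <= x - 1.
Proof. by move=> x_gt0; have := exp_ineq1_le (ln x); rewrite exp_ln //; lra. Qed.

Lemma ratio_log2_bound (n d s : R) : 1 <= d <= n -> 1 <= s ->
  ln s <= d * (1 + ln (n / d)) -> n >= n / d / (2 * (2 + log2 (n / d))) * log2 s.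
Proof.
move=> [d_ge1 le_dn] s_ge1; rewrite /log2.
set K := n / d; set L := ln K; set l := ln 2 => ln_s.
have n_eq : n = K * d by rewrite /K; field; lra.
have K_ge1 : 1 <= K by nra.
have L_ge0 : 0 <= L by apply: ln_ge0.
have l_gt : / 2 < l := ln_lt_2.
have -> : K / (2 * (2 + L / l)) * (ln s / l) = K * ln s / (2 * (2 * l + L)).
  by field; split; lra.
apply: Rle_ge; apply: (Rmult_le_reg_r (2 * (2 * l + L))); first lra.
rewrite /Rdiv Rmult_assoc Rinv_l ?Rmult_1_r; last lra.
have slack : 0 <= d * (4 * l - 1 + L) by apply: Rmult_le_pos; lra.
rewrite n_eq Rmult_assoc; apply: Rmult_le_compat_l; lra.
Qed.

Lemma mul_ln_addr_le x y : 0 < x -> 0 <= y -> x * ln (x + y) <= x * ln x + y.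
Proof.
move=> x_gt0 y_ge0.
have yx_ge0 : 0 <= y / x by apply: Rmult_le_pos => //; left; apply: Rinv_0_lt_compat.
have -> : x + y = x * (1 + y / x) by field; lra.
rewrite ln_mult; try lra.
have /ln_le_sub1/(Rmult_le_compat_l x) : 0 < 1 + y / x by lra.
have -> : x * (1 + y / x - 1) = y by field; lra.
lra.
Qed.

End Logarithms.

Section LnBinomialSum.
Variables n d : nat.
Hypotheses (d_gt0 : 0 < d) (le_dn : d <= n).
Local Open Scope R_scope.

Lemma ln_sum_binomial_le :
  ln (INR (\sum_(k < d.+1) 'C(n, k))) <= INR d * (1 + ln (INR n / INR d)).
Proof.
set C := \sum_(k < d.+1) _.
have d_ge1 : 1 <= INR d by apply: (le_INR 1); apply/leP.
have le_dnR : INR d <= INR n by apply: le_INR; apply/leP.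
have C_gt0 : 0 < INR C.
  by apply: lt_0_INR; apply/ltP; rewrite /C big_ord_recl bin0 leq_addr.
have n_ge1 : 1 <= INR n by lra.
have pos_dd : 0 < INR d ^ d by apply: pow_lt; lra.
have pos_nn : 0 < INR n ^ (n - d) by apply: pow_lt; lra.
have bound : INR C * (INR d ^ d * INR n ^ (n - d)) <= (INR n + INR d) ^ n.
  have /leP/le_INR := sum_binomial_bound le_dn.
  by rewrite !mulnE !mult_INR !INR_expn plus_INR.
have ln_bound : ln (INR C) + (INR d * ln (INR d) + INR (n - d) * ln (INR n))
    <= INR n * ln (INR n + INR d).
  rewrite -!ln_pow -?ln_mult //; try lra; last exact: Rmult_lt_0_compat.
  by apply: ln_le _ bound; do 2?apply: Rmult_lt_0_compat.
have : INR n * ln (INR n + INR d) <= INR n * ln (INR n) + INR d.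
  by apply: mul_ln_addr_le; lra.
rewrite minus_INR in ln_bound; last exact/leP.
rewrite /Rdiv ln_mult ?ln_Rinv; try apply: Rinv_0_lt_compat; lra.
Qed.

End LnBinomialSum.

Theorem proposition5p2 (G : zmodType) (Z : seq G) :
  (1 <= dimZ Z)%N ->
  let K := (INR (size Z) / INR (dimZ Z))%R in
  (INR (size Z) >= K / (2 * (2 + log2 K)) * log2 (INR (size (Sigma Z))))%R.
Proof.
move=> d_ge1 K; have le_dn := dimZ_le_size Z.
apply: ratio_log2_bound.
- by split; [apply: (le_INR 1) | apply: le_INR]; apply/leP.
- by apply: (le_INR 1); apply/leP; apply: size_Sigma_gt0.
apply: Rle_trans (ln_sum_binomial_le d_ge1 le_dn).
apply: ln_le; first by apply: lt_0_INR; apply/ltP; apply: size_Sigma_gt0.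
by apply: le_INR; apply/leP; rewrite -card_small_sets; apply: size_Sigma_le_small_sets.
Qed.
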